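(* Let $B$ be a minimum-weight basis of the weighted uncertainty matroid $\mathcal{M}=(E,\mathcal{I},A,w)$ and let $Q$ be a certificate that verifies $B$. Let $e\notin B$ and $e'\in B$ with $L_e=L_{e'}=w_e=w_{e'}$ be such that $e'\in C_e$, where $C_e$ is the fundamental circuit of $e$ with respect to $B$. Then $Q'=(Q\setminus\{e'\})\cup\{e\}$ is a certificate that verifies $B'=(B\cup\{e\})\setminus\{e'\}$.
   Context: A weighted uncertainty matroid $\mathcal{M}=(E,\mathcal{I},A,w)$ consists of a matroid $M=(E,\mathcal{I})$ on a finite set $E$, for each $e\in E$ a non-empty finite union $A_e$ of bounded real intervals (each open or closed), and a weight $w_e\in A_e$. Let $L_e=\inf A_e$, $U_e=\sup A_e$. A minimum-weight basis is a basis of $M$ minimizing the sum of weights. A weight assignment is $w^*:E\to\mathbb{R}$ with $w^*_e\in A_e$, consistent with $Q$ if $w^*_e=w_e$ for $e\in Q$. $Q$ verifies a basis $B$ (is a certificate for $B$) if for every weight assignment consistent with $Q$, $B$ is a minimum-weight basis with respect to it. For a basis $B$ and $f\notin B$, the fundamental circuit of $f$ is the unique circuit contained in $B\cup\{f\}$. *)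

From HB Require Import structures.
From mathcomp Require Import all_boot all_order all_algebra.
From mathcomp Require Import reals.
Set Implicit Arguments. Unset Strict Implicit. Unset Printing Implicit Defensive.
Import Order.TTheory GRing.Theory Num.Theory.
Local Open Scope ring_scope.

Record matroid (E : finType) := Matroid {
  indep : {set E} -> bool;
  indep0 : indep set0;
  indep_sub : forall I J : {set E}, J \subset I -> indep I -> indep J;
  indep_aug : forall I J : {set E}, indep I -> indep J -> (#|I| < #|J|)%N ->
     exists2 x, x \in J :\: I & indep (x |: I)
}.

Definition is_basis (E : finType) (M : matroid E) (B : {set E}) : Prop :=
  indep M B /\ forall X : {set E}, B \subset X -> indep M X -> X = B.

Definition is_circuit (E : finType) (M : matroid E) (C : {set E}) : Prop :=
  ~~ indep M C /\ forall x, x \in C -> indep M (C :\ x).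

Record bitv (R : realType) := BItv { lo : R; hi : R; lo_closed : bool; hi_closed : bool }.

Definition in_bitv (R : realType) (I : bitv R) (x : R) : bool :=
  (if lo_closed I then lo I <= x else lo I < x) &&
  (if hi_closed I then x <= hi I else x < hi I).

Definition in_area (R : realType) (A : seq (bitv R)) (x : R) : bool :=
  has (fun I => in_bitv I x) A.

Record wumatroid (R : realType) (E : finType) := WUMatroid {
  wm_M : matroid E;
  wm_A : E -> seq (bitv R);
  wm_w : E -> R;
  wm_A_nonempty : forall e, exists x, in_area (wm_A e) x;
  wm_w_in : forall e, in_area (wm_A e) (wm_w e)
}.

Definition lowL (R : realType) (E : finType) (W : wumatroid R E) (e : E) : R :=
  inf (fun x : R => is_true (in_area (wm_A W e) x)).

Definition weight_of (R : realType) (E : finType) (ws : E -> R) (B : {set E}) : R :=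
  \sum_(e in B) ws e.

Definition min_weight_basis (R : realType) (E : finType) (M : matroid E)
    (ws : E -> R) (B : {set E}) : Prop :=
  is_basis M B /\ forall B' : {set E}, is_basis M B' -> weight_of ws B <= weight_of ws B'.

Definition consistent (R : realType) (E : finType) (W : wumatroid R E)
    (Q : {set E}) (ws : E -> R) : Prop :=
  (forall e, in_area (wm_A W e) (ws e)) /\ (forall e, e \in Q -> ws e = wm_w W e).

Definition verifies (R : realType) (E : finType) (W : wumatroid R E)
    (Q B : {set E}) : Prop :=
  forall ws : E -> R, consistent W Q ws -> min_weight_basis (wm_M W) ws B.

From HB Require Import structures.
From mathcomp Require Import all_boot all_order all_algebra.
From mathcomp Require Import reals.
From mathcomp Require classical_sets.
Set Implicit Arguments. Unset Strict Implicit. Unset Printing Implicit Defensive.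
Import Order.TTheory GRing.Theory Num.Theory.
Local Open Scope ring_scope.

(* Given weights ws consistent with Q', reset the weight of e' to its true
   value w_{e'}.  The result is consistent with Q, so B is minimal for it, and
   it lies below ws because w_{e'} = L_{e'}.  After the reset e and e' both
   weigh w_e = w_{e'}, so B and B' = B + e - e' weigh the same; as e' is not
   in B', the weight of B' is unaffected by the reset.  Hence B' is minimal
   for ws, being a basis by exchange along the fundamental circuit of e. *)

Section MatroidExchange.

Variables (E : finType) (M : matroid E).

Lemma indep_card_le_basis (B X : {set E}) :
  is_basis M B -> indep M X -> (#|X| <= #|B|)%N.
Proof.
move=> [indB maxB] indX; rewrite leqNgt; apply/negP => ltBX.
have [x /setDP [xX xNB] indxB] := indep_aug indB indX ltBX.
by move: xNB; rewrite -(maxB _ (subsetUr _ _) indxB) setU11.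
Qed.

Lemma indep_card_basis (B X : {set E}) :
  is_basis M B -> indep M X -> (#|B| <= #|X|)%N -> is_basis M X.
Proof.
move=> bB indX leBX; split=> // Y sXY indY.
apply/eqP; rewrite eq_sym eqEcard sXY /=.
exact: leq_trans (indep_card_le_basis bB indY) leBX.
Qed.

Lemma indep_augment (I K : {set E}) :
  indep M I -> indep M K ->
  exists J : {set E},
    [/\ indep M J, I \subset J, J \subset I :|: K & (#|K| <= #|J|)%N].
Proof.
move=> indI indK.
pose P J := [&& indep M J, I \subset J & J \subset I :|: K].
have PI : P I by rewrite /P indI subxx subsetUl.
case: (arg_maxnP (fun J : {set E} => #|J|) PI) => J /and3P [indJ sIJ sJIK] maxJ.
exists J; split=> //; rewrite leqNgt; apply/negP => ltJK.
have [x /setDP [xK xNJ] indxJ] := indep_aug indJ indK ltJK.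
have PxJ : P (x |: J).
  rewrite /P indxJ (subset_trans sIJ (subsetUr _ _)) subUset sub1set.
  by rewrite inE xK orbT.
by have := maxJ _ PxJ; rewrite /= cardsU1 xNJ add1n ltnn.
Qed.

Lemma card_exchange (B : {set E}) (e e' : E) :
  e \notin B -> e' \in B -> #|(B :|: [set e]) :\ e'| = #|B|.
Proof.
move=> eNB e'B; rewrite setUC.
have := cardsD1 e' (e |: B); rewrite cardsU1 eNB in_setU1 e'B orbT add1n.
by move=> [].
Qed.

Lemma basis_exchange (B C : {set E}) (e e' : E) :
  is_basis M B -> e \notin B -> is_circuit M C -> C \subset e |: B ->
  e' \in C -> e' \in B -> is_basis M ((B :|: [set e]) :\ e').
Proof.
move=> bB eNB [depC indCD] sCeB e'C e'B.
have [J [indJ sCJ sJ leBJ]] := indep_augment (indCD e' e'C) bB.1.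
have e'NJ : e' \notin J.
  apply: contra depC => e'J; apply: indep_sub indJ.
  by rewrite -(setD1K e'C) subUset sub1set e'J sCJ.
have sJB' : J \subset (B :|: [set e]) :\ e'.
  apply/subsetP => x xJ; rewrite in_setD1 (memPn e'NJ) //= setUC.
  apply: (subsetP (subset_trans sJ _) x xJ).
  by rewrite subUset (subset_trans (subD1set C e') sCeB) subsetUr.
have <- : J = (B :|: [set e]) :\ e'.
  by apply/eqP; rewrite eqEcard sJB' card_exchange.
exact: indep_card_basis bB indJ leBJ.
Qed.

End MatroidExchange.

Lemma in_area_has_lbound (R : realType) (A : seq (bitv R)) :
  classical_sets.has_lbound (fun x : R => is_true (in_area A x)).
Proof.
elim: A => [|I A [m lbm]]; first by exists 0.
exists (Num.min (lo I) m) => x /orP [xI|xA]; rewrite ge_min.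
- by move: xI; rewrite /in_bitv; case: lo_closed => /andP [+ _] => [->|/ltW ->].
- by rewrite lbm ?orbT.
Qed.

Section UncertaintyMatroid.

Variables (R : realType) (E : finType) (W : wumatroid R E).

Lemma lowL_le (f : E) (x : R) : in_area (wm_A W f) x -> lowL W f <= x.
Proof. exact: (ge_inf (in_area_has_lbound _)). Qed.

Lemma consistentS (Q1 Q2 : {set E}) (ws : E -> R) :
  Q1 \subset Q2 -> consistent W Q2 ws -> consistent W Q1 ws.
Proof. by move=> sQ12 [inA eqQ2]; split=> // f /(subsetP sQ12)/eqQ2. Qed.

Lemma consistent_reset (Q : {set E}) (ws : E -> R) (x : E) :
  consistent W (Q :\ x) ws ->
  consistent W Q (fun f => if f == x then wm_w W x else ws f).
Proof.
move=> [inA eqQ]; split=> f; case: eqVneq => [->|nfx] //.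
- exact: wm_w_in.
- by move=> fQ; apply: eqQ; rewrite in_setD1 nfx.
Qed.

End UncertaintyMatroid.

Lemma weight_of_exchange (R : realType) (E : finType) (ws : E -> R)
    (B : {set E}) (e e' : E) :
  ws e = ws e' -> e \notin B -> e' \in B ->
  weight_of ws ((B :|: [set e]) :\ e') = weight_of ws B.
Proof.
move=> ws_ee' eNB e'B; apply: (@addrI _ (ws e')).
by rewrite /weight_of -(big_setD1 e') ?inE ?e'B ?orbT // setUC big_setU1 //= ws_ee'.
Qed.

Theorem lemma11 (R : realType) (E : finType) (W : wumatroid R E)
    (B Q C : {set E}) (e e' : E) :
  min_weight_basis (wm_M W) (wm_w W) B ->
  verifies W Q B ->
  e \notin B -> e' \in B ->
  lowL W e = lowL W e' -> lowL W e' = wm_w W e -> wm_w W e = wm_w W e' ->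
  (* C is the fundamental circuit of e w.r.t. B *)
  is_circuit (wm_M W) C -> C \subset e |: B ->
  e' \in C ->
  verifies W ((Q :\ e') :|: [set e]) ((B :|: [set e]) :\ e').
Proof.
move=> [bB _] verB eNB e'B _ lowe'_we we_we' circC sCeB e'C ws consQ'.
have [inA eqQ'] := consQ'.
pose ws2 f := if f == e' then wm_w W e' else ws f.
have [_ minB] : min_weight_basis (wm_M W) ws2 B.
  exact/verB/consistent_reset/(consistentS (subsetUl _ _) consQ').
have ws2_le f : ws2 f <= ws f.
  by rewrite /ws2; case: eqP => [->|_] //; rewrite -we_we' -lowe'_we lowL_le ?inA.
have ws_e : ws e = wm_w W e by apply: eqQ'; rewrite in_setU set11 orbT.
have ws2_ee' : ws2 e = ws2 e'.
  by rewrite /ws2 eqxx ws_e ifN //; apply: contraNneq eNB => ->.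
split=> [|X bX]; first exact: basis_exchange bB eNB circC sCeB e'C e'B.
have -> : weight_of ws ((B :|: [set e]) :\ e') = weight_of ws2 B.
  rewrite -(weight_of_exchange ws2_ee' eNB e'B); apply: eq_bigr => f.
  by rewrite in_setD1 /ws2 => /andP [/negPf -> _].
by apply: le_trans (minB X bX) _; apply: ler_sum.
Qed.
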